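(* Assume $\ker(K)\cap\ker(D)=\{0\}$ and let $\Psi$ be a reconstructor. Let $\{\delta_k\}_{k\in\mathbb{N}}$ be a sequence of noise levels with $\delta_k\to0$ as $k\to\infty$, and for each $k$ let $y^{\delta_k}=Kx^{GT}+e_k$ with $\|e_k\|_2\le\delta_k$. For each $k$ let $x^*_{\Psi,\delta_k}$ be the unique minimizer over $\mathcal{X}$ of $\mathcal{J}_{\Psi,\delta_k}(x)=\|Kx-y^{\delta_k}\|_2^2+\lambda\|w(\Psi(y^{\delta_k}))\odot|Dx|\|_1$. Then the sequence $\{x^*_{\Psi,\delta_k}\}_{k\in\mathbb{N}}$ is bounded.
   Context: Let $K\in\mathbb{R}^{m\times n}$ with $m\le n$, and let $D_h,D_v\in\mathbb{R}^{n\times n}$ be the discrete horizontal and vertical difference operators; $Dx=\begin{bmatrix}D_hx\\ D_vx\end{bmatrix}\in\mathbb{R}^{2n}$, and $|Dx|\in\mathbb{R}^n$, $(|Dx|)_i=\sqrt{(D_hx)_i^2+(D_vx)_i^2}$. $\mathcal{X}=\{x\in\mathbb{R}^n: x_i\ge 0\ \forall i\}$; $x^{GT}\in\mathcal{X}$ is fixed. Fix $\lambda>0$, $\eta>0$, $p\in(0,1)$, and for $\tilde x\in\mathbb{R}^n$ define $(w(\tilde{x}))_i=\big(\eta/\sqrt{\eta^2+(|D\tilde{x}|)_i^2}\big)^{1-p}$. A reconstructor is a Lipschitz continuous map $\Psi:\mathbb{R}^m\to\mathbb{R}^n$. $\odot$ is the entrywise product. *)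

From HB Require Import structures.
From mathcomp Require Import all_boot all_order all_algebra.
From mathcomp Require Import all_classical all_reals all_analysis.
Set Implicit Arguments. Unset Strict Implicit. Unset Printing Implicit Defensive.
Import Order.TTheory GRing.Theory Num.Theory.
Import numFieldNormedType.Exports.
Local Open Scope ring_scope.

Definition norm2 (R : realType) (k : nat) (v : 'cV[R]_k) : R :=
  Num.sqrt (\sum_(i < k) (v i 0) ^+ 2).

Definition norm1 (R : realType) (k : nat) (v : 'cV[R]_k) : R :=
  \sum_(i < k) `|v i 0|.

Definition Dop (R : realType) (n : nat) (Dh Dv : 'M[R]_n) : 'M[R]_(n + n, n) :=
  col_mx Dh Dv.

Definition absD (R : realType) (n : nat) (Dh Dv : 'M[R]_n) (x : 'cV[R]_n)
  : 'cV[R]_n :=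
  \col_i Num.sqrt (((Dh *m x) i 0) ^+ 2 + ((Dv *m x) i 0) ^+ 2).

Definition weight (R : realType) (n : nat) (Dh Dv : 'M[R]_n) (eta p : R)
  (xt : 'cV[R]_n) : 'cV[R]_n :=
  \col_i powR (eta / Num.sqrt (eta ^+ 2 + (absD Dh Dv xt i 0) ^+ 2)) (1 - p).

Definition in_X (R : realType) (n : nat) (x : 'cV[R]_n) : Prop :=
  forall i, 0 <= x i 0.

Definition hadamard (R : realType) (n : nat) (u v : 'cV[R]_n) : 'cV[R]_n :=
  \col_i (u i 0 * v i 0).

Definition Jfun (R : realType) (m n : nat) (K : 'M[R]_(m, n)) (Dh Dv : 'M[R]_n)
  (lambda eta p : R) (Psi : 'cV[R]_m -> 'cV[R]_n) (y : 'cV[R]_m) (x : 'cV[R]_n) : R :=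
  (norm2 (K *m x - y)) ^+ 2
  + lambda * norm1 (hadamard (weight Dh Dv eta p (Psi y)) (absD Dh Dv x)).

Definition lipschitz_map (R : realType) (m n : nat) (Psi : 'cV[R]_m -> 'cV[R]_n) : Prop :=
  exists L : R, forall y1 y2, norm2 (Psi y1 - Psi y2) <= L * norm2 (y1 - y2).

From HB Require Import structures.
From mathcomp Require Import all_boot all_order all_algebra.
From mathcomp Require Import all_classical all_reals all_analysis.
Import Order.TTheory GRing.Theory Num.Theory.
Import numFieldNormedType.Exports.
Local Open Scope classical_set_scope.
Local Open Scope ring_scope.

(* The data y_k = K x^GT + e_k are bounded, hence so are Psi(y_k) (Psi is
   Lipschitz) and |D Psi(y_k)|, so the weights w(Psi(y_k)) stay in [b, 1] for
   some b > 0 independent of k.  Minimality against the admissible point x^GT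
   gives J(x_k) <= J(x^GT) <= sup_k ||e_k||^2 + lambda ||D x^GT||_1; this bounds
   the residual K x_k - y_k and, since the weights are at least b, also D x_k.
   Thus [K; D] x_k is bounded, and the injective matrix [K; D] has a left
   inverse, so x_k is bounded. *)

Lemma cvgn_norm_bounded {R : realType} {u : nat -> R} :
  cvgn u -> exists M, forall k, `|u k| <= M.
Proof.
move=> /cvg_seq_bounded.
case/(@ex_bound _ _ _ _ _ (globally_properfilter (a:=0%N) I)) => M HM.
by exists M => k; apply: HM.
Qed.

Section BoundedSequences.
Context {R : realType}.

Definition bounded_seq {a b : nat} (u : nat -> 'M[R]_(a, b)) : Prop :=
  exists M, forall k i j, `|u k i j| <= M.

Lemma norm2_ge0 {k : nat} (v : 'cV[R]_k) : 0 <= norm2 v.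
Proof. exact: sqrtr_ge0. Qed.

Lemma entry_le_norm2 {k : nat} (v : 'cV[R]_k) i : `|v i 0| <= norm2 v.
Proof.
rewrite -sqrtr_sqr ler_wsqrtr // (bigD1 i) //= lerDl.
by rewrite sumr_ge0 // => j _; rewrite sqr_ge0.
Qed.

Lemma norm2N {k : nat} (v : 'cV[R]_k) : norm2 (- v) = norm2 v.
Proof. by congr Num.sqrt; apply: eq_bigr => i _; rewrite mxE sqrrN. Qed.

Lemma norm2_le_entries {k : nat} (v : 'cV[R]_k) M :
  (forall i, `|v i 0| <= M) -> norm2 v <= Num.sqrt (k%:R * M ^+ 2).
Proof.
move=> vM; rewrite ler_wsqrtr // mulr_natl -[X in _ *+ X]card_ord -sumr_const.
apply: ler_sum => i _; rewrite -real_normK ?num_real //.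
by rewrite lerXn2r ?nnegrE // (le_trans _ (vM i)).
Qed.

Lemma bounded_seq_norm2 {a : nat} (u : nat -> 'cV[R]_a) :
  bounded_seq u <-> exists C, forall k, norm2 (u k) <= C.
Proof.
split=> [[M uM] | [C uC]].
  by exists (Num.sqrt (a%:R * M ^+ 2)) => k; apply: norm2_le_entries => i; apply: uM.
by exists C => k i j; rewrite ord1; apply: le_trans (uC k); apply: entry_le_norm2.
Qed.

Lemma row_sum_le_sum_entries {a b : nat} (A : 'M[R]_(a, b)) i :
  \sum_j `|A i j| <= \sum_i' \sum_j `|A i' j|.
Proof. by rewrite (bigD1 i) //= lerDl sumr_ge0 // => i' _; apply: sumr_ge0. Qed.

Lemma entry_le_sum_entries {a b : nat} (A : 'M[R]_(a, b)) i j :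
  `|A i j| <= \sum_i' \sum_j' `|A i' j'|.
Proof.
apply: le_trans (row_sum_le_sum_entries A i).
by rewrite (bigD1 j) //= lerDl sumr_ge0.
Qed.

Lemma bounded_seq_cst {a b : nat} (A : 'M[R]_(a, b)) : bounded_seq (fun=> A).
Proof. by exists (\sum_i \sum_j `|A i j|) => _; apply: entry_le_sum_entries. Qed.

Lemma bounded_seqD {a b : nat} (u v : nat -> 'M[R]_(a, b)) :
  bounded_seq u -> bounded_seq v -> bounded_seq (fun k => u k + v k).
Proof.
move=> [M uM] [N vN]; exists (M + N) => k i j.
by rewrite mxE (le_trans (ler_normD _ _)) // lerD.
Qed.

Lemma bounded_seq_mulmx {a b c : nat} (A : 'M[R]_(a, b)) {u : nat -> 'M[R]_(b, c)} :
  bounded_seq u -> bounded_seq (fun k => A *m u k).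
Proof.
move=> [M uM]; exists ((\sum_i \sum_l `|A i l|) * `|M|) => k i j.
rewrite mxE (le_trans (ler_norm_sum _ _ _)) //.
apply: le_trans _ (ler_wpM2r (normr_ge0 M) (row_sum_le_sum_entries A i)).
rewrite mulr_suml; apply: ler_sum => l _; rewrite normrM ler_wpM2l //.
exact: le_trans (uM k l j) (ler_norm M).
Qed.

Lemma bounded_seq_col_mx {a1 a2 b : nat}
    (u : nat -> 'M[R]_(a1, b)) (v : nat -> 'M[R]_(a2, b)) :
  bounded_seq u -> bounded_seq v -> bounded_seq (fun k => col_mx (u k) (v k)).
Proof.
move=> [M uM] [N vN]; exists (Num.max M N) => k i j.
by case: (split_ordP i) => i' ->; rewrite ?col_mxEu ?col_mxEd le_max ?uM ?vN ?orbT.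
Qed.

Lemma injective_mulmx_left_inv {a b : nat} (A : 'M[R]_(a, b)) :
  (forall x : 'cV[R]_b, A *m x = 0 -> x = 0) -> exists B, B *m A = 1%:M.
Proof.
move=> Ainj; apply/row_fullP; rewrite -cokermx_eq0; apply/eqP/matrixP => i j.
have /matrixP/(_ i 0) : col j (cokermx A) = 0.
  by apply: Ainj; rewrite colE mulmxA mulmx_coker mul0mx.
by rewrite !mxE.
Qed.

Lemma bounded_seq_mulmx_inj {a b c : nat}
    (A : 'M[R]_(a, b)) (u : nat -> 'M[R]_(b, c)) :
  (forall x : 'cV[R]_b, A *m x = 0 -> x = 0) ->
  bounded_seq (fun k => A *m u k) -> bounded_seq u.
Proof.
move=> /injective_mulmx_left_inv [B BA] /(bounded_seq_mulmx B).
by under eq_fun do rewrite mulmxA BA mul1mx.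
Qed.

Lemma bounded_seq_lipschitz {a b : nat}
    {Psi : 'cV[R]_a -> 'cV[R]_b} {y : nat -> 'cV[R]_a} :
  lipschitz_map Psi -> bounded_seq y -> bounded_seq (Psi \o y).
Proof.
move=> [L PsiL] yb.
have [C yC] : exists C, forall k, norm2 (y k - y 0%N) <= C.
  by apply/bounded_seq_norm2/bounded_seqD => //; apply: bounded_seq_cst.
exists (`|L| * C + norm2 (Psi (y 0%N))) => k i j; rewrite ord1 /=.
rewrite -[Psi _ i 0](subrK (Psi (y 0%N) i 0)) (le_trans (ler_normD _ _)) //.
rewrite lerD ?entry_le_norm2 //.
have := entry_le_norm2 (Psi (y k) - Psi (y 0%N)) i; rewrite !mxE => /le_trans; apply.
apply: le_trans (PsiL _ _) _; apply: le_trans (ler_wpM2r (norm2_ge0 _) (ler_norm L)) _.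
by rewrite ler_wpM2l.
Qed.

End BoundedSequences.

Lemma div_sqrt_sqrD_le (R : realType) (eta s t : R) :
  0 < eta -> 0 <= s <= t -> eta / Num.sqrt (eta ^+ 2 + t) <= eta / Num.sqrt (eta ^+ 2 + s).
Proof.
move=> eta_gt0 /andP[s_ge0 st].
have sqrt_gt0 u : 0 <= u -> 0 < Num.sqrt (eta ^+ 2 + u).
  by move=> u_ge0; rewrite sqrtr_gt0 ltr_wpDr // exprn_gt0.
rewrite ler_pM2l // lef_pV2 ?posrE ?sqrt_gt0 ?(le_trans s_ge0) //.
by rewrite ler_wsqrtr // lerD2l.
Qed.

Lemma div_sqrt_sqrD_le1 (R : realType) (eta s : R) :
  0 < eta -> 0 <= s -> eta / Num.sqrt (eta ^+ 2 + s) <= 1.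
Proof.
move=> eta_gt0 s_ge0; apply: le_trans (@div_sqrt_sqrD_le _ eta 0 s eta_gt0 _) _.
  by rewrite lexx s_ge0.
by rewrite addr0 sqrtr_sqr gtr0_norm // divff // gt_eqF.
Qed.

Section TotalVariation.
Context {R : realType} {m n : nat}.
Variables (K : 'M[R]_(m, n)) (Dh Dv : 'M[R]_n).

Lemma absD_ge0 (x : 'cV[R]_n) i : 0 <= absD Dh Dv x i 0.
Proof. by rewrite mxE sqrtr_ge0. Qed.

Lemma absD_le (x : 'cV[R]_n) i :
  absD Dh Dv x i 0 <= `|(Dh *m x) i 0| + `|(Dv *m x) i 0|.
Proof.
rewrite [leLHS]mxE -(ger0_norm (addr_ge0 (normr_ge0 _) (normr_ge0 _))) -sqrtr_sqr.
rewrite ler_wsqrtr // sqrrD !real_normK ?num_real // -addrA lerD2l lerDr.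
by rewrite mulrn_wge0 // mulr_ge0.
Qed.

Lemma normDh_le_absD (x : 'cV[R]_n) i : `|(Dh *m x) i 0| <= absD Dh Dv x i 0.
Proof. by rewrite [leRHS]mxE -sqrtr_sqr ler_wsqrtr // lerDl sqr_ge0. Qed.

Lemma normDv_le_absD (x : 'cV[R]_n) i : `|(Dv *m x) i 0| <= absD Dh Dv x i 0.
Proof. by rewrite [leRHS]mxE -sqrtr_sqr ler_wsqrtr // lerDr sqr_ge0. Qed.

Lemma bounded_seq_absD {x : nat -> 'cV[R]_n} :
  bounded_seq x -> bounded_seq (absD Dh Dv \o x).
Proof.
move=> xb; have [M DhM] := bounded_seq_mulmx Dh xb.
have [N DvN] := bounded_seq_mulmx Dv xb.
exists (M + N) => k i j; rewrite ord1 ger0_norm ?absD_ge0 //.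
by apply: le_trans (absD_le _ _) _; rewrite lerD ?DhM ?DvN.
Qed.

Lemma bounded_seq_Dop (x : nat -> 'cV[R]_n) :
  bounded_seq (absD Dh Dv \o x) -> bounded_seq (fun k => Dop Dh Dv *m x k).
Proof.
move=> [M DM]; under eq_fun do rewrite mul_col_mx.
apply: bounded_seq_col_mx; exists M => k i j; rewrite ord1;
  apply: le_trans (le_trans (ler_norm _) (DM k i 0)).
- exact: normDh_le_absD.
- exact: normDv_le_absD.
Qed.

Context {lambda eta p : R} {Psi : 'cV[R]_m -> 'cV[R]_n}.
Hypotheses (lambda_ge0 : 0 <= lambda) (eta_gt0 : 0 < eta) (p_le1 : p <= 1).

Lemma weight_ge0 (xt : 'cV[R]_n) i : 0 <= weight Dh Dv eta p xt i 0.
Proof. by rewrite mxE powR_ge0. Qed.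

Lemma weight_le1 (xt : 'cV[R]_n) i : weight Dh Dv eta p xt i 0 <= 1.
Proof.
have -> : 1 = 1 `^ (1 - p) :> R by rewrite powR1.
rewrite mxE ge0_ler_powR ?subr_ge0 ?nnegrE ?div_sqrt_sqrD_le1 ?sqr_ge0 //.
by rewrite divr_ge0 ?sqrtr_ge0 ?ltW.
Qed.

Lemma weight_ge (xt : 'cV[R]_n) i S : absD Dh Dv xt i 0 <= S ->
  (eta / Num.sqrt (eta ^+ 2 + S ^+ 2)) `^ (1 - p) <= weight Dh Dv eta p xt i 0.
Proof.
have base_ge0 t : 0 <= eta / Num.sqrt (eta ^+ 2 + t) by rewrite divr_ge0 ?sqrtr_ge0 ?ltW.
move=> DS; rewrite mxE ge0_ler_powR ?subr_ge0 ?nnegrE ?base_ge0 //.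
apply: div_sqrt_sqrD_le => //; rewrite sqr_ge0 /=.
by rewrite lerXn2r ?nnegrE ?absD_ge0 ?(le_trans (absD_ge0 _ _) DS).
Qed.

Lemma weight_bounded_below {xt : nat -> 'cV[R]_n} : bounded_seq xt ->
  exists2 b, 0 < b & forall k i, b <= weight Dh Dv eta p (xt k) i 0.
Proof.
move=> /bounded_seq_absD[S DS].
exists ((eta / Num.sqrt (eta ^+ 2 + S ^+ 2)) `^ (1 - p)).
  by rewrite powR_gt0 // divr_gt0 // sqrtr_gt0 ltr_wpDr ?sqr_ge0 ?exprn_gt0.
by move=> k i; apply: weight_ge; apply: le_trans (ler_norm _) (DS k i 0).
Qed.

Lemma Jfun_ge_resid y x : norm2 (K *m x - y) ^+ 2 <= Jfun K Dh Dv lambda eta p Psi y x.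
Proof. by rewrite /Jfun lerDl mulr_ge0 // sumr_ge0. Qed.

Lemma Jfun_ge_absD y x i b : b <= weight Dh Dv eta p (Psi y) i 0 ->
  lambda * b * absD Dh Dv x i 0 <= Jfun K Dh Dv lambda eta p Psi y x.
Proof.
move=> bw; rewrite /Jfun -[leLHS]add0r lerD ?sqr_ge0 // -mulrA ler_wpM2l //.
rewrite /norm1 (bigD1 i) //= -[leLHS]addr0 lerD ?sumr_ge0 //.
rewrite [hadamard _ _ _ _]mxE normrM !ger0_norm ?weight_ge0 ?absD_ge0 //.
by rewrite ler_wpM2r ?absD_ge0.
Qed.

Lemma Jfun_le_unweighted y x :
  Jfun K Dh Dv lambda eta p Psi y x
  <= norm2 (K *m x - y) ^+ 2 + lambda * \sum_i absD Dh Dv x i 0.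
Proof.
rewrite /Jfun lerD2l ler_wpM2l // ler_sum // => i _.
rewrite mxE normrM !ger0_norm ?weight_ge0 ?absD_ge0 //.
by rewrite ler_piMl ?absD_ge0 ?weight_le1.
Qed.

End TotalVariation.

Lemma bounded_seq_of_Jfun_le {R : realType} {m n : nat} (K : 'M[R]_(m, n))
    (Dh Dv : 'M[R]_n) {lambda eta p : R} {Psi : 'cV[R]_m -> 'cV[R]_n}
    (y : nat -> 'cV[R]_m) (x : nat -> 'cV[R]_n) (b C : R) :
  0 < lambda -> 0 < b ->
  (forall z : 'cV[R]_n, K *m z = 0 -> Dop Dh Dv *m z = 0 -> z = 0) ->
  bounded_seq y ->
  (forall k i, b <= weight Dh Dv eta p (Psi (y k)) i 0) ->
  (forall k, Jfun K Dh Dv lambda eta p Psi (y k) (x k) <= C) ->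
  bounded_seq x.
Proof.
move=> lambda_gt0 b_gt0 ker0 y_bd w_ge J_le; have lambda_ge0 := ltW lambda_gt0.
have resid_bd : bounded_seq (fun k => K *m x k - y k).
  apply/bounded_seq_norm2; exists (Num.sqrt C) => k.
  rewrite -(ger0_norm (norm2_ge0 _)) -sqrtr_sqr ler_wsqrtr //.
  exact: le_trans (Jfun_ge_resid _ _ _ lambda_ge0 _ _) (J_le k).
have Kx_bd : bounded_seq (fun k => K *m x k).
  have -> : (fun k => K *m x k) = (fun k => (K *m x k - y k) + y k).
    by apply/funext => k; rewrite subrK.
  exact: bounded_seqD resid_bd y_bd.
have Dx_bd : bounded_seq (fun k => Dop Dh Dv *m x k).
  apply: bounded_seq_Dop; exists (C / (lambda * b)) => k i j.
  rewrite ord1 /= ger0_norm ?absD_ge0 // ler_pdivlMr ?mulr_gt0 // mulrC.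
  exact: le_trans (Jfun_ge_absD _ _ _ lambda_ge0 _ _ _ _ (w_ge k i)) (J_le k).
apply: (bounded_seq_mulmx_inj (col_mx K (Dop Dh Dv))).
  by move=> z; rewrite mul_col_mx -col_mx0 => /eq_col_mx[]; apply: ker0.
by under eq_fun do rewrite mul_col_mx; apply: bounded_seq_col_mx.
Qed.

Theorem lemma8 (R : realType) (m n : nat) (K : 'M[R]_(m, n)) (Dh Dv : 'M[R]_n)
  (xGT : 'cV[R]_n) (lambda eta p : R)
  (Psi : 'cV[R]_m -> 'cV[R]_n)
  (delta : nat -> R) (e : nat -> 'cV[R]_m) (xs : nat -> 'cV[R]_n) :
  (m <= n)%N ->
  in_X xGT ->
  0 < lambda -> 0 < eta -> 0 < p -> p < 1 ->
  (forall x : 'cV[R]_n, K *m x = 0 -> Dop Dh Dv *m x = 0 -> x = 0) ->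
  lipschitz_map Psi ->
  delta @ \oo --> (0 : R) ->
  (forall k, norm2 (e k) <= delta k) ->
  (forall k, in_X (xs k) /\
     (forall z, in_X z ->
        Jfun K Dh Dv lambda eta p Psi (K *m xGT + e k) (xs k)
        <= Jfun K Dh Dv lambda eta p Psi (K *m xGT + e k) z) /\
     (forall z, in_X z ->
        (forall z', in_X z' ->
           Jfun K Dh Dv lambda eta p Psi (K *m xGT + e k) z
           <= Jfun K Dh Dv lambda eta p Psi (K *m xGT + e k) z') ->
        z = xs k)) ->
  exists C : R, forall k, norm2 (xs k) <= C.
Proof.
move=> _ xGT_ge0 lambda_gt0 eta_gt0 _ /ltW p_le1 ker0 Psi_lip delta0 e_le xs_min.
pose y k := K *m xGT + e k.
have [E e_leE] : exists E, forall k, norm2 (e k) <= E.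
  have [M deltaM] := cvgn_norm_bounded (cvgP _ delta0).
  by exists M => k; rewrite (le_trans (e_le k)) // (le_trans (ler_norm _)).
have y_bd : bounded_seq y.
  by apply: bounded_seqD; [apply: bounded_seq_cst | apply/bounded_seq_norm2; exists E].
have [b b_gt0 w_ge] :=
  weight_bounded_below Dh Dv eta_gt0 p_le1 (bounded_seq_lipschitz Psi_lip y_bd).
pose C := E ^+ 2 + lambda * \sum_i absD Dh Dv xGT i 0.
apply/bounded_seq_norm2.
apply: (bounded_seq_of_Jfun_le K Dh Dv y xs b C lambda_gt0 b_gt0 ker0 y_bd w_ge) => k.
apply: le_trans (proj1 (proj2 (xs_min k)) _ xGT_ge0) _.
apply: le_trans (Jfun_le_unweighted _ _ _ (ltW lambda_gt0) eta_gt0 p_le1 _ _) _.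
rewrite lerD2r /y opprD addrA subrr add0r norm2N.
by rewrite lerXn2r ?nnegrE ?norm2_ge0 ?(le_trans (norm2_ge0 _) (e_leE k)).
Qed.
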